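(* Let $m$ be a nonnegative integer and suppose there is a resolvable $(56m+8,8,1)$-BIBD. Let $0\le t\le 8m$ and suppose there exists a nested $(3t+1,4,1)$-BIBD. Then there exists a nested $(v,4,1)$-BIBD for $v=168m+3t+25$.
   Context: A $(v,k,\lambda)$-BIBD is a set $X$ of $v$ points with a multiset $\mathcal{A}$ of $k$-subsets such that every pair of distinct points lies in exactly $\lambda$ blocks (partial: at most $\lambda$). It is resolvable if its blocks can be partitioned into parallel classes, each of which partitions $X$. A $(v,4,1)$-BIBD is nested if there is a map $\phi:\mathcal{A}\to X$ such that $\{A\cup\{\phi(A)\}:A\in\mathcal{A}\}$ is the block multiset of a partial $(v,5,2)$-BIBD on $X$ (in particular $\phi(A)\notin A$). *)

From mathcomp Require Import all_boot.
Unset Printing Implicit Defensive.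

(* Point set X = 'I_v; the block multiset is a list of subsets of X
   (repetitions allowed, order irrelevant). *)

Definition partial_BIBD (v k lam : nat) (B : seq {set 'I_v}) : Prop :=
  (forall A, A \in B -> #|A| = k) /\
  (forall x y : 'I_v, x != y -> count (fun A : {set 'I_v} => (x \in A) && (y \in A)) B <= lam).

Definition BIBD (v k lam : nat) (B : seq {set 'I_v}) : Prop :=
  (forall A, A \in B -> #|A| = k) /\
  (forall x y : 'I_v, x != y -> count (fun A : {set 'I_v} => (x \in A) && (y \in A)) B = lam).

Definition parallel_class (v : nat) (c : seq {set 'I_v}) : Prop :=
  forall x : 'I_v, count (fun A : {set 'I_v} => x \in A) c = 1.

Definition resolvable_BIBD (v k lam : nat) (B : seq {set 'I_v}) : Prop :=
  BIBD v k lam B /\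
  exists P : seq (seq {set 'I_v}),
    perm_eq (flatten P) B /\ (forall c, c \in P -> parallel_class v c).

(* nested (v,4,1)-BIBD: a map phi from the blocks (occurrences, given as the
   list f aligned with B) to points, with phi(A) \notin A, such that
   {A U {phi A}} is the block multiset of a partial (v,5,2)-BIBD. *)
Definition nested_BIBD (v : nat) (B : seq {set 'I_v}) : Prop :=
  BIBD v 4 1 B /\
  exists f : seq 'I_v,
    size f = size B /\
    (forall p, p \in zip B f -> p.2 \notin p.1) /\
    partial_BIBD v 5 2 [seq p.2 |: p.1 | p <- zip B f].

From mathcomp Require Import all_boot zify.
Set Implicit Arguments. Unset Strict Implicit. Unset Printing Implicit Defensive.

(* Let X be the point set of the resolvable (56m+8,8,1)-BIBD, with its 8m+1 parallel
   classes P_0, ..., P_8m, and let D be the nested (3t+1,4,1)-BIBD with a point oo.  The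
   t blocks of D through oo, minus oo, are triples G_0, ..., G_(t-1) partitioning D - oo.
   On the point set D + X x {0,1,2}, place on K x {0,1,2} for every block K of P_j
   - a nested 4-GDD of type 3^9 whose ninth group is G_j, if j < t,
   - a nested (25,4,1)-BIBD whose 25th point is oo, if j = t,
   - a nested 4-GDD of type 3^8, if j > t,
   and add the blocks of D.  Pairs of X x {0,1,2} with distinct first coordinates are
   covered in the class containing them, pairs (x,i), (x,i') and pairs (oo,(x,i)) in
   P_t, pairs (d,(x,i)) in the class P_j with d in G_j, and pairs of D by D itself.  Each
   ingredient satisfies "every pair lies in at most twice as many augmented blocks as
   blocks", an inequality that adds up over the union, so the union is nested. *)

Definition pair_count (L : seq (seq nat)) (x y : nat) : nat :=
  count (fun A => (x \in A) && (y \in A)) L.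

Definition base (L : seq (seq nat * nat)) : seq (seq nat) := [seq p.1 | p <- L].
Definition augmented (L : seq (seq nat * nat)) : seq (seq nat) := [seq p.2 :: p.1 | p <- L].

Definition nblock_ok (v : nat) (p : seq nat * nat) : bool :=
  [&& uniq (p.2 :: p.1), size p.1 == 4 & all (gtn v) (p.2 :: p.1)].

Definition nest_bounded (L : seq (seq nat * nat)) : Prop :=
  forall x y, x != y -> pair_count (augmented L) x y <= 2 * pair_count (base L) x y.

Lemma pair_countC L x y : pair_count L x y = pair_count L y x.
Proof. by apply: eq_count => A; rewrite andbC. Qed.

Lemma pair_count_ge v L x y : all (all (gtn v)) L -> v <= x -> pair_count L x y = 0.
Proof.
move=> /allP L_lt v_le_x; apply/eqP; rewrite -leqn0 leqNgt -has_count.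
apply/hasP => -[A /L_lt /allP A_lt /andP[/A_lt /=]]; lia.
Qed.

Lemma base_lt v L : all (nblock_ok v) L -> all (all (gtn v)) (base L).
Proof. by move=> /allP ok; apply/allP => _ /mapP[p /ok /and3P[_ _ /andP[_ ?]] ->]. Qed.

Lemma augmented_lt v L : all (nblock_ok v) L -> all (all (gtn v)) (augmented L).
Proof. by move=> /allP ok; apply/allP => _ /mapP[p /ok /and3P[_ _ ?] ->]. Qed.

Lemma count_sum (T : Type) (a : pred T) (s : seq T) : count a s = \sum_(x <- s) a x.
Proof. by rewrite -sum1_count big_mkcond. Qed.

(* Blocks with their nested points.  In the GDDs point l lies in the group l %/ 3;
   gdd_3_8 is what remains of nested_25 after deleting the point 24, whose blocks are
   the groups completed by 24. *)
Definition nested_25 : seq (seq nat * nat) :=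
  [:: ([:: 1; 3; 8; 19], 12);
     ([:: 1; 6; 11; 22], 17);
     ([:: 1; 9; 14; 4], 8);
     ([:: 1; 12; 17; 7], 4);
     ([:: 1; 15; 20; 10], 22);
     ([:: 1; 18; 23; 13], 7);
     ([:: 1; 21; 5; 16], 6);
     ([:: 4; 7; 11; 13], 16);
     ([:: 7; 10; 14; 16], 21);
     ([:: 10; 13; 17; 19], 23);
     ([:: 13; 16; 20; 22], 3);
     ([:: 16; 19; 23; 4], 14);
     ([:: 19; 22; 5; 7], 0);
     ([:: 22; 4; 8; 10], 13);
     ([:: 3; 6; 12; 16], 9);
     ([:: 6; 9; 15; 19], 13);
     ([:: 9; 12; 18; 22], 2);
     ([:: 12; 15; 21; 4], 20);
     ([:: 15; 18; 3; 7], 14);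
     ([:: 18; 21; 6; 10], 12);
     ([:: 21; 3; 9; 13], 1);
     ([:: 0; 3; 10; 23], 8);
     ([:: 0; 6; 13; 5], 18);
     ([:: 0; 9; 16; 8], 20);
     ([:: 0; 12; 19; 11], 15);
     ([:: 0; 15; 22; 14], 6);
     ([:: 0; 18; 4; 17], 9);
     ([:: 0; 21; 7; 20], 11);
     ([:: 2; 3; 17; 22], 19);
     ([:: 2; 6; 20; 4], 10);
     ([:: 2; 9; 23; 7], 15);
     ([:: 2; 12; 5; 10], 17);
     ([:: 2; 15; 8; 13], 21);
     ([:: 2; 18; 11; 16], 23);
     ([:: 2; 21; 14; 19], 5);
     ([:: 3; 11; 14; 20], 2);
     ([:: 6; 14; 17; 23], 20);
     ([:: 9; 17; 20; 5], 7);
     ([:: 12; 20; 23; 8], 5);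
     ([:: 15; 23; 5; 11], 1);
     ([:: 18; 5; 8; 14], 22);
     ([:: 21; 8; 11; 17], 18);
     ([:: 24; 0; 1; 2], 16);
     ([:: 24; 3; 4; 5], 15);
     ([:: 24; 6; 7; 8], 2);
     ([:: 24; 9; 10; 11], 19);
     ([:: 24; 12; 13; 14], 11);
     ([:: 24; 15; 16; 17], 8);
     ([:: 24; 18; 19; 20], 1);
     ([:: 24; 21; 22; 23], 4)].

Definition gdd_3_8 : seq (seq nat * nat) := [seq p <- nested_25 | 24 \notin p.1].

Definition gdd_3_9 : seq (seq nat * nat) :=
  [:: ([:: 0; 3; 9; 13], 25);
     ([:: 0; 5; 16; 24], 6);
     ([:: 1; 4; 10; 14], 26);
     ([:: 1; 3; 17; 25], 7);
     ([:: 2; 5; 11; 12], 24);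
     ([:: 2; 4; 15; 26], 8);
     ([:: 3; 6; 12; 16], 19);
     ([:: 3; 8; 10; 18], 0);
     ([:: 4; 7; 13; 17], 20);
     ([:: 4; 6; 11; 19], 1);
     ([:: 5; 8; 14; 15], 18);
     ([:: 5; 7; 9; 20], 2);
     ([:: 6; 0; 15; 10], 22);
     ([:: 6; 2; 13; 21], 3);
     ([:: 7; 1; 16; 11], 23);
     ([:: 7; 0; 14; 22], 4);
     ([:: 8; 2; 17; 9], 21);
     ([:: 8; 1; 12; 23], 5);
     ([:: 9; 12; 18; 22], 7);
     ([:: 9; 14; 25; 6], 15);
     ([:: 10; 13; 19; 23], 8);
     ([:: 10; 12; 26; 7], 16);
     ([:: 11; 14; 20; 21], 6);
     ([:: 11; 13; 24; 8], 17);
     ([:: 12; 15; 21; 25], 1);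
     ([:: 12; 17; 19; 0], 9);
     ([:: 13; 16; 22; 26], 2);
     ([:: 13; 15; 20; 1], 10);
     ([:: 14; 17; 23; 24], 0);
     ([:: 14; 16; 18; 2], 11);
     ([:: 15; 9; 24; 19], 4);
     ([:: 15; 11; 22; 3], 12);
     ([:: 16; 10; 25; 20], 5);
     ([:: 16; 9; 23; 4], 13);
     ([:: 17; 11; 26; 18], 3);
     ([:: 17; 10; 21; 5], 14);
     ([:: 18; 21; 0; 4], 16);
     ([:: 18; 23; 7; 15], 24);
     ([:: 19; 22; 1; 5], 17);
     ([:: 19; 21; 8; 16], 25);
     ([:: 20; 23; 2; 3], 15);
     ([:: 20; 22; 6; 17], 26);
     ([:: 21; 24; 3; 7], 10);
     ([:: 21; 26; 1; 9], 18);
     ([:: 22; 25; 4; 8], 11);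
     ([:: 22; 24; 2; 10], 19);
     ([:: 23; 26; 5; 6], 9);
     ([:: 23; 25; 0; 11], 20);
     ([:: 24; 18; 6; 1], 13);
     ([:: 24; 20; 4; 12], 21);
     ([:: 25; 19; 7; 2], 14);
     ([:: 25; 18; 5; 13], 22);
     ([:: 26; 20; 8; 0], 12);
     ([:: 26; 19; 3; 14], 23)].


Definition table_ok (n : nat) (T : seq (seq nat * nat)) (lam : nat -> nat -> bool) : bool :=
  all (nblock_ok n) T &&
  all (fun x => all (fun y => (x == y) ||
      (pair_count (base T) x y == lam x y) && (pair_count (augmented T) x y <= 2 * lam x y))
    (iota 0 n)) (iota 0 n).

Definition gdd_lam (l l' : nat) : bool := l %/ 3 != l' %/ 3.

Lemma nested_25_ok : table_ok 25 nested_25 (fun _ _ => true). Proof. by vm_compute. Qed.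
Lemma gdd_3_8_ok : table_ok 24 gdd_3_8 gdd_lam. Proof. by vm_compute. Qed.
Lemma gdd_3_9_ok : table_ok 27 gdd_3_9 gdd_lam. Proof. by vm_compute. Qed.

Lemma table_ok_count n T lam x y : table_ok n T lam -> x < n -> y < n -> x != y ->
  pair_count (base T) x y = lam x y /\ pair_count (augmented T) x y <= 2 * lam x y.
Proof.
case/andP=> _ /allP counts x_lt y_lt xy.
have := counts x; rewrite mem_iota add0n x_lt => /(_ isT) /allP /(_ y).
by rewrite mem_iota add0n y_lt (negbTE xy) => /(_ isT) /andP[/eqP].
Qed.

Definition relabel (mu : nat -> nat) (T : seq (seq nat * nat)) : seq (seq nat * nat) :=
  [seq (map mu p.1, mu p.2) | p <- T].

Lemma base_relabel mu T : base (relabel mu T) = map (map mu) (base T).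
Proof. by rewrite /base -!map_comp. Qed.

Lemma augmented_relabel mu T : augmented (relabel mu T) = map (map mu) (augmented T).
Proof. by rewrite /augmented -!map_comp. Qed.

Section Relabel.

Variables (n : nat) (mu : nat -> nat).
Hypothesis mu_inj : {in gtn n &, injective mu}.

Let mem_map_lt (A : seq nat) l : all (gtn n) A -> l < n -> (mu l \in map mu A) = (l \in A).
Proof.
move=> /allP A_lt l_lt; apply/mapP/idP => [[z z_in mu_eq]|]; last by exists l.
by rewrite (mu_inj l_lt (A_lt z z_in) mu_eq).
Qed.

Lemma pair_count_map_in L l l' : all (all (gtn n)) L -> l < n -> l' < n ->
  pair_count (map (map mu) L) (mu l) (mu l') = pair_count L l l'.
Proof.
move=> /allP L_lt l_lt l'_lt; rewrite /pair_count count_map.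
by apply: eq_in_count => A /L_lt A_lt /=; rewrite !mem_map_lt.
Qed.

Lemma pair_count_map_out L x y : all (all (gtn n)) L -> (forall l, l < n -> mu l != x) ->
  pair_count (map (map mu) L) x y = 0.
Proof.
move=> /allP L_lt x_out; apply/eqP; rewrite -leqn0 leqNgt -has_count.
apply/hasP => -[_ /mapP[A /L_lt /allP A_lt ->] /andP[/mapP[l /A_lt l_lt x_eq] _]].
by move: (x_out l l_lt); rewrite x_eq eqxx.
Qed.

Variables (T : seq (seq nat * nat)) (lam : nat -> nat -> bool).
Hypothesis T_ok : table_ok n T lam.

Let base_T_lt : all (all (gtn n)) (base T).
Proof. by apply: base_lt; case/andP: T_ok. Qed.

Let augmented_T_lt : all (all (gtn n)) (augmented T).
Proof. by apply: augmented_lt; case/andP: T_ok. Qed.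

Lemma relabel_count l l' : l < n -> l' < n -> l != l' ->
  pair_count (base (relabel mu T)) (mu l) (mu l') = lam l l'.
Proof.
move=> l_lt l'_lt ll'; rewrite base_relabel pair_count_map_in //.
by case: (table_ok_count T_ok l_lt l'_lt ll').
Qed.

Lemma relabel_count_out x y : (forall l, l < n -> mu l != x) ->
  pair_count (base (relabel mu T)) x y = 0.
Proof. by move=> x_out; rewrite base_relabel pair_count_map_out. Qed.

Lemma relabel_nest_bounded : nest_bounded (relabel mu T).
Proof.
have image_or_out z : (exists2 l, l < n & z = mu l) \/ (forall l, l < n -> mu l != z).
  have [/mapP[l]|z_out] := boolP (z \in map mu (iota 0 n)).
    by rewrite mem_iota; left; exists l.
  by right=> l l_lt; apply: contraNneq z_out => <-; rewrite map_f // mem_iota.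
move=> x y xy; rewrite augmented_relabel.
have [[l l_lt x_eq]|x_out] := image_or_out x; last by rewrite pair_count_map_out.
have [[l' l'_lt y_eq]|y_out] := image_or_out y; last by rewrite pair_countC pair_count_map_out.
have ll' : l != l' by apply: contraNneq xy => ll'; rewrite x_eq y_eq ll'.
rewrite x_eq y_eq relabel_count // pair_count_map_in //.
by case: (table_ok_count T_ok l_lt l'_lt ll').
Qed.

Lemma relabel_nblock_ok v : (forall l, l < n -> mu l < v) -> all (nblock_ok v) (relabel mu T).
Proof.
move=> mu_lt; case/andP: T_ok => /allP T_blocks _.
apply/allP => _ /mapP[p /T_blocks /and3P[p_uniq p_size /allP p_lt] ->].
apply/and3P; split.
- change (uniq (map mu (p.2 :: p.1))); rewrite map_inj_in_uniq //.
  by apply: sub_in2 mu_inj => z /p_lt.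
- by rewrite size_map p_size.
- change (all (gtn v) (map mu (p.2 :: p.1))).
  by apply/allP => _ /mapP[z /p_lt z_lt ->]; apply: mu_lt.
Qed.

End Relabel.

(* Points 0, ..., 3t of the new design are those of the small design (oo = 0), and
   point b of the resolvable design becomes the three points inflated t b i, i < 3. *)
Definition inflated (t b i : nat) : nat := 3 * t + 1 + 3 * b + i.

Definition inflate (t : nat) (K g : seq nat) (l : nat) : nat :=
  if l < 24 then inflated t (nth 0 K (l %/ 3)) (l %% 3) else nth 0 g (l - 24).

Definition label (K : seq nat) (b i : nat) : nat := 3 * index b K + i.

Lemma inflated_inj t b b' i i' :
  i < 3 -> i' < 3 -> inflated t b i = inflated t b' i' -> b = b' /\ i = i'.
Proof. by rewrite /inflated => *; split; lia. Qed.

Lemma label_lt K b i : b \in K -> i < 3 -> label K b i < 3 * size K.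
Proof. by rewrite -index_mem /label => ? ?; lia. Qed.

Lemma label_div3 K b i : i < 3 -> label K b i %/ 3 = index b K.
Proof. by rewrite /label => i_lt; lia. Qed.

Section Inflation.

Variables (t : nat) (K g : seq nat).
Hypotheses (K_uniq : uniq K) (K_size : size K = 8).
Hypotheses (g_uniq : uniq g) (g_lt : all (gtn (3 * t + 1)) g).

Let nth_K_in l : l < 24 -> nth 0 K (l %/ 3) \in K.
Proof. by move=> l_lt; apply: mem_nth; rewrite K_size; lia. Qed.

Let nth_g_lt k : nth 0 g k < 3 * t + 1.
Proof.
have [k_lt|k_ge] := ltnP k (size g); first exact: (allP g_lt) _ (mem_nth 0 k_lt).
by rewrite nth_default //; lia.
Qed.

Lemma inflate_label b i : b \in K -> i < 3 -> inflate t K g (label K b i) = inflated t b i.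
Proof.
move=> b_in i_lt; rewrite /inflate -[24]/(3 * 8) -K_size label_lt // label_div3 // nth_index //.
by congr inflated; rewrite /label; lia.
Qed.

Lemma inflate_extra x : x \in g -> inflate t K g (24 + index x g) = x.
Proof. by move=> x_in; rewrite /inflate ltnNge leq_addr /= addKn nth_index. Qed.

Lemma inflate_inj : {in gtn (24 + size g) &, injective (inflate t K g)}.
Proof.
move=> l l' l_lt l'_lt; rewrite /inflate; case: ifP => l24; case: ifP => l'24.
- case/inflated_inj; rewrite ?ltn_mod // => K_eq mod_eq.
  have div_eq : l %/ 3 = l' %/ 3.
    by apply/eqP; rewrite -(nth_uniq 0 _ _ K_uniq) ?K_eq ?K_size //; lia.
  by rewrite (divn_eq l 3) (divn_eq l' 3) div_eq mod_eq.
- by have := nth_g_lt (l' - 24); rewrite /inflated; lia.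
- by have := nth_g_lt (l - 24); rewrite /inflated; lia.
- have l_in : l - 24 < size g by move: l_lt; rewrite inE; lia.
  have l'_in : l' - 24 < size g by move: l'_lt; rewrite inE; lia.
  by move/eqP; rewrite (nth_uniq 0 l_in l'_in g_uniq) => /eqP; lia.
Qed.

Lemma inflate_neq_inflated b i l : b \notin K -> i < 3 -> inflate t K g l != inflated t b i.
Proof.
move=> b_out i_lt; rewrite /inflate; case: ifP => l24.
  by apply: contraNneq b_out => /inflated_inj[||<- _] //; [rewrite ltn_mod | apply: nth_K_in].
by have := nth_g_lt (l - 24); rewrite /inflated; lia.
Qed.

Lemma inflate_neq_small x l :
  x < 3 * t + 1 -> x \notin g -> l < 24 + size g -> inflate t K g l != x.
Proof.
move=> x_lt x_out l_lt; rewrite /inflate; case: ltnP => l24; first by rewrite /inflated; lia.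
by apply: contraNneq x_out => <-; apply: mem_nth; rewrite ltn_subLR.
Qed.

Lemma inflate_lt N l : all (gtn N) K -> inflate t K g l < 3 * t + 1 + 3 * N.
Proof.
move=> /allP K_lt; rewrite /inflate; case: ifP => l24; last by have := nth_g_lt (l - 24); lia.
have : nth 0 K (l %/ 3) < N := K_lt _ (nth_K_in l24).
by have := ltn_mod l 3; rewrite /inflated; lia.
Qed.

End Inflation.

Definition piece_table (t j : nat) : seq (seq nat * nat) :=
  if j < t then gdd_3_9 else if j == t then nested_25 else gdd_3_8.

Definition piece_lam (t j l l' : nat) : bool := (j == t) || gdd_lam l l'.

(* With gs = G_0, ..., G_(t-1): the points of the small design filling the pieces of
   class j, namely G_j if j < t, oo = 0 if j = t, and none if j > t. *)
Definition piece_extra (gs : seq (seq nat)) (j : nat) : seq nat := nth [::] (rcons gs [:: 0]) j.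

Definition piece (t : nat) (gs : seq (seq nat)) (j : nat) (K : seq nat) : seq (seq nat * nat) :=
  relabel (inflate t K (piece_extra gs j)) (piece_table t j).

Section Pieces.

Variables (t : nat) (gs : seq (seq nat)).
Hypothesis gs_size : size gs = t.
Hypothesis gs_triples :
  forall g, g \in gs -> [/\ size g = 3, uniq g & all (gtn (3 * t + 1)) g].

Lemma size_piece_extra j :
  size (piece_extra gs j) = if j < t then 3 else if j == t then 1 else 0.
Proof.
rewrite /piece_extra nth_rcons gs_size; case: ltngtP => // j_lt.
by case: (gs_triples (mem_nth [::] (_ : j < size gs))); rewrite ?gs_size.
Qed.

Lemma piece_extra_ok j : uniq (piece_extra gs j) && all (gtn (3 * t + 1)) (piece_extra gs j).
Proof.
rewrite /piece_extra nth_rcons gs_size; case: ltngtP => // j_lt; last by rewrite /= andbT; lia.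
by case: (gs_triples (mem_nth [::] (_ : j < size gs))) => [|_ -> ->]; rewrite ?gs_size.
Qed.

Lemma piece_table_ok j :
  table_ok (24 + size (piece_extra gs j)) (piece_table t j) (piece_lam t j).
Proof.
rewrite size_piece_extra /piece_table /piece_lam.
by case: ltngtP => _; [exact: gdd_3_9_ok | exact: gdd_3_8_ok | exact: nested_25_ok].
Qed.

Variables (j : nat) (K : seq nat).
Hypotheses (K_uniq : uniq K) (K_size : size K = 8).

Let g := piece_extra gs j.
Let g_uniq : uniq g. Proof. by case/andP: (piece_extra_ok j). Qed.
Let g_lt : all (gtn (3 * t + 1)) g. Proof. by case/andP: (piece_extra_ok j). Qed.
Let mu_inj := inflate_inj K_uniq K_size g_uniq g_lt.
Let mu_label := inflate_label K_uniq K_size g_uniq g_lt.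
Let mu_neq_inflated := inflate_neq_inflated K_uniq K_size g_uniq g_lt.
Let mu_neq_small := inflate_neq_small K_uniq K_size g_uniq g_lt.
Let count_out := relabel_count_out (mu := inflate t K g) (piece_table_ok j).
Let count_in := relabel_count mu_inj (piece_table_ok j).

Let label_lt24 b i : b \in K -> i < 3 -> label K b i < 24.
Proof. by rewrite -[24]/(3 * 8) -K_size; apply: label_lt. Qed.

Lemma piece_count_inflated b c i i' :
  i < 3 -> i' < 3 -> inflated t b i != inflated t c i' ->
  pair_count (base (piece t gs j K)) (inflated t b i) (inflated t c i') =
  [&& b \in K, c \in K & (b != c) || (j == t)].
Proof.
move=> i_lt i'_lt bc.
have [b_in|b_out] := boolP (b \in K); last first.
  by rewrite count_out // => l _; apply: mu_neq_inflated.
have [c_in|c_out] := boolP (c \in K); last first.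
  by rewrite pair_countC count_out // => l _; apply: mu_neq_inflated.
have labels_neq : label K b i != label K c i'.
  by apply: contraNneq bc => e; rewrite -mu_label // e mu_label.
rewrite -(mu_label b_in i_lt) -(mu_label c_in i'_lt).
rewrite count_in ?ltn_addr ?label_lt24 //.
rewrite /piece_lam /gdd_lam !label_div3 // orbC; congr (_ || _).
congr (~~ _); apply/eqP/eqP => [e|-> //].
by rewrite -(nth_index 0 b_in) -(nth_index 0 c_in) e.
Qed.

Lemma piece_count_small_inflated x c i' :
  x < 3 * t + 1 -> i' < 3 ->
  pair_count (base (piece t gs j K)) x (inflated t c i') = (x \in g) && (c \in K).
Proof.
move=> x_lt i'_lt.
have [x_in|x_out] := boolP (x \in g); last first.
  by rewrite count_out // => l; apply: mu_neq_small.
have [c_in|c_out] := boolP (c \in K); last first.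
  by rewrite pair_countC count_out // => l _; apply: mu_neq_inflated.
have ix_lt : index x g < size g by rewrite index_mem.
have c_lt := label_lt24 c_in i'_lt.
rewrite -{1}(inflate_extra t K x_in) -(mu_label c_in i'_lt).
rewrite count_in ?ltn_add2l ?ltn_addr //.
  rewrite /piece_lam /gdd_lam; have -> : (24 + index x g) %/ 3 != label K c i' %/ 3 by lia.
  by rewrite orbT.
by rewrite neq_ltn; apply/orP; right; lia.
Qed.

Lemma piece_count_small x y :
  x < 3 * t + 1 -> y < 3 * t + 1 -> x != y -> pair_count (base (piece t gs j K)) x y = 0.
Proof.
move=> x_lt y_lt xy.
have [x_in|x_out] := boolP (x \in g); last first.
  by rewrite count_out // => l; apply: mu_neq_small.
have [y_in|y_out] := boolP (y \in g); last first.
  by rewrite pair_countC count_out // => l; apply: mu_neq_small.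
have ix_lt : index x g < size g by rewrite index_mem.
have iy_lt : index y g < size g by rewrite index_mem.
have ixy : index x g != index y g.
  by apply: contraNneq xy => e; rewrite -(nth_index 0 x_in) -(nth_index 0 y_in) e.
have := size_piece_extra j; rewrite -/g => size_g.
rewrite -(inflate_extra t K x_in) -(inflate_extra t K y_in).
rewrite count_in ?ltn_add2l ?eqn_add2l //.
apply/eqP; rewrite eqb0 /piece_lam /gdd_lam negb_or negbK.
by move: size_g; case: ltngtP => _ size_g; lia.
Qed.

Lemma piece_nest_bounded : nest_bounded (piece t gs j K).
Proof. exact: (relabel_nest_bounded mu_inj (piece_table_ok j)). Qed.

Lemma piece_nblock_ok N : all (gtn N) K -> all (nblock_ok (3 * t + 1 + 3 * N)) (piece t gs j K).
Proof.
move=> K_lt; apply: (relabel_nblock_ok mu_inj (piece_table_ok j)) => l _.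
exact: inflate_lt.
Qed.

End Pieces.

Definition nat_enum (v : nat) (A : {set 'I_v}) : seq nat := [seq nat_of_ord x | x <- enum A].

Lemma mem_nat_enum v (A : {set 'I_v}) (x : 'I_v) : ((x : nat) \in nat_enum A) = (x \in A).
Proof. by rewrite mem_map ?mem_enum //; apply: val_inj. Qed.

Lemma nat_enum_uniq v (A : {set 'I_v}) : uniq (nat_enum A).
Proof. by rewrite map_inj_uniq ?enum_uniq //; apply: val_inj. Qed.

Lemma size_nat_enum v (A : {set 'I_v}) : size (nat_enum A) = #|A|.
Proof. by rewrite size_map cardE. Qed.

Lemma nat_enum_lt v (A : {set 'I_v}) : all (gtn v) (nat_enum A).
Proof. by apply/allP => _ /mapP[x _ ->]; apply: ltn_ord. Qed.

Lemma nblock_ok_widen v w p : v <= w -> nblock_ok v p -> nblock_ok w p.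
Proof.
move=> vw /and3P[p_uniq p_size /allP p_lt]; rewrite /nblock_ok p_uniq p_size.
by apply/allP => z /p_lt /= z_lt; apply: leq_trans vw.
Qed.

Lemma pair_count_cat_flatten (U : Type) (h : seq nat * nat -> seq nat) A n
    (Q : nat -> seq U) (F : nat -> U -> seq (seq nat * nat)) x y :
  pair_count (map h (A ++ flatten [seq flatten [seq F j K | K <- Q j] | j <- iota 0 n])) x y =
  pair_count (map h A) x y + \sum_(j < n) \sum_(K <- Q j) pair_count (map h (F j K)) x y.
Proof.
rewrite /pair_count map_cat count_cat map_flatten count_flatten sumnE !big_map.
have -> : iota 0 n = index_iota 0 n by rewrite /index_iota subn0.
rewrite big_mkord; congr (_ + _); apply: eq_bigr => j _.
by rewrite map_flatten count_flatten sumnE !big_map.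
Qed.

Definition construction (t N : nat) (P : seq (seq {set 'I_N})) (D : seq (seq nat * nat))
    (gs : seq (seq nat)) : seq (seq nat * nat) :=
  D ++ flatten [seq flatten [seq piece t gs j (nat_enum K) | K <- nth [::] P j]
                | j <- iota 0 (size P)].

Lemma inflated_decode t N y : 3 * t + 1 <= y -> y < 3 * t + 1 + 3 * N ->
  exists (c : 'I_N) i, i < 3 /\ y = inflated t c i.
Proof.
move=> y_ge y_lt; have c_lt : (y - (3 * t + 1)) %/ 3 < N by lia.
by exists (Ordinal c_lt), ((y - (3 * t + 1)) %% 3); split; rewrite /inflated /=; lia.
Qed.

Section Construction.

Variables (t N : nat) (P : seq (seq {set 'I_N})) (D : seq (seq nat * nat)).
Variable gs : seq (seq nat).
Hypothesis P_design : BIBD N 8 1 (flatten P).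
Hypothesis P_parallel : forall c, c \in P -> parallel_class N c.
Hypothesis t_lt : t < size P.
Hypotheses (D_ok : all (nblock_ok (3 * t + 1)) D) (D_nest : nest_bounded D).
Hypothesis D_once :
  forall x y, x < 3 * t + 1 -> y < 3 * t + 1 -> x != y -> pair_count (base D) x y = 1.
Hypothesis gs_size : size gs = t.
Hypothesis gs_triples :
  forall g, g \in gs -> [/\ size g = 3, uniq g & all (gtn (3 * t + 1)) g].
Hypothesis extras_partition :
  forall x, x < 3 * t + 1 -> count (fun g => x \in g) (rcons gs [:: 0]) = 1.

Let L := construction t P D gs.

Let size_class_block j K : K \in nth [::] P j -> size (nat_enum K) = 8.
Proof.
move=> K_in; rewrite size_nat_enum; case: P_design => block_size _; apply: block_size.
have [j_lt|j_ge] := ltnP j (size P); last by move: K_in; rewrite nth_default.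
by apply/flattenP; exists (nth [::] P j); rewrite ?mem_nth.
Qed.

Let sum_class_mem j (b : 'I_N) : j < size P -> \sum_(K <- nth [::] P j) (b \in K) = 1.
Proof. by move=> j_lt; rewrite -count_sum; apply/P_parallel/mem_nth. Qed.

Let sum_classes (F : {set 'I_N} -> nat) :
  \sum_(j < size P) \sum_(K <- nth [::] P j) F K = \sum_(K <- flatten P) F K.
Proof. by rewrite big_flatten /= (big_nth [::]) big_mkord. Qed.

Let sum_extras x :
  \sum_(j < size P) (x \in piece_extra gs j) = count (fun g => x \in g) (rcons gs [:: 0]).
Proof.
rewrite count_sum (big_nth [::]) size_rcons gs_size big_mkord /piece_extra.
rewrite (big_ord_widen _ (fun j => nat_of_bool (x \in nth [::] (rcons gs [:: 0]) j)) t_lt).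
rewrite [RHS]big_mkcond /=; apply: eq_bigr => j _; case: ltnP => // j_ge.
by rewrite nth_default // size_rcons gs_size.
Qed.

Let count_small j K (K_in : K \in nth [::] P j) :=
  piece_count_small gs_size gs_triples j (nat_enum_uniq K) (size_class_block K_in).
Let count_small_inflated j K (K_in : K \in nth [::] P j) :=
  piece_count_small_inflated gs_size gs_triples j (nat_enum_uniq K) (size_class_block K_in).
Let count_inflated j K (K_in : K \in nth [::] P j) :=
  piece_count_inflated gs_size gs_triples j (nat_enum_uniq K) (size_class_block K_in).
Let nest_bounded_piece j K (K_in : K \in nth [::] P j) :=
  piece_nest_bounded gs_size gs_triples j (nat_enum_uniq K) (size_class_block K_in).
Let nblock_ok_piece j K (K_in : K \in nth [::] P j) :=
  piece_nblock_ok gs_size gs_triples j (nat_enum_uniq K) (size_class_block K_in) (nat_enum_lt K).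

Let D_base_lt : all (all (gtn (3 * t + 1))) (base D). Proof. exact: base_lt. Qed.

Lemma construction_count_small x y :
  x < 3 * t + 1 -> y < 3 * t + 1 -> x != y -> pair_count (base L) x y = 1.
Proof.
move=> x_lt y_lt xy; rewrite /base pair_count_cat_flatten D_once // big1 // => j _.
rewrite big1_seq // => K /andP[_ K_in].
exact: (count_small K_in x_lt y_lt xy).
Qed.

Lemma construction_count_small_inflated x (c : 'I_N) i' :
  x < 3 * t + 1 -> i' < 3 -> pair_count (base L) x (inflated t c i') = 1.
Proof.
move=> x_lt i'_lt; rewrite /base pair_count_cat_flatten pair_countC.
rewrite (pair_count_ge _ D_base_lt) ?add0n; last by rewrite /inflated; lia.
under eq_bigr => j _ do (under eq_big_seq => K K_in do
  rewrite count_small_inflated // mem_nat_enum -mulnb).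
under eq_bigr => j _ do rewrite -big_distrr /= (sum_class_mem _ (ltn_ord j)) muln1.
by rewrite sum_extras extras_partition.
Qed.

Lemma construction_count_inflated (b c : 'I_N) i i' :
  i < 3 -> i' < 3 -> inflated t b i != inflated t c i' ->
  pair_count (base L) (inflated t b i) (inflated t c i') = 1.
Proof.
move=> i_lt i'_lt bc; rewrite /base pair_count_cat_flatten.
rewrite (pair_count_ge _ D_base_lt) ?add0n; last by rewrite /inflated; lia.
under eq_bigr => j _ do (under eq_big_seq => K K_in do
  rewrite count_inflated // !mem_nat_enum).
have [<-|b_neq_c] := eqVneq b c.
  under eq_bigr => j _ do (under eq_bigr => K _ do rewrite eqxx /= andbA andbb andbC -mulnb;
    rewrite -big_distrr /= (sum_class_mem _ (ltn_ord j)) muln1).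
  rewrite (bigD1 (Ordinal t_lt)) //= eqxx big1 // => j /negbTE.
  by rewrite -(inj_eq val_inj) => ->.
under eq_bigr => j _ do (under eq_bigr => K _ do rewrite b_neq_c andbT).
by rewrite sum_classes -count_sum; case: P_design => _ ->.
Qed.

Lemma construction_once x y : x < 3 * t + 1 + 3 * N -> y < 3 * t + 1 + 3 * N -> x != y ->
  pair_count (base L) x y = 1.
Proof.
move=> x_lt y_lt xy.
have [x_small|x_big] := ltnP x (3 * t + 1); have [y_small|y_big] := ltnP y (3 * t + 1).
- exact: construction_count_small.
- have [c [i' [i'_lt ->]]] := inflated_decode y_big y_lt.
  exact: construction_count_small_inflated.
- have [b [i [i_lt ->]]] := inflated_decode x_big x_lt.
  by rewrite pair_countC; apply: construction_count_small_inflated.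
- have [b [i [i_lt x_eq]]] := inflated_decode x_big x_lt.
  have [c [i' [i'_lt y_eq]]] := inflated_decode y_big y_lt.
  by move: xy; rewrite x_eq y_eq; apply: construction_count_inflated.
Qed.

Lemma construction_nest_bounded : nest_bounded L.
Proof.
move=> x y xy; rewrite /base /augmented !pair_count_cat_flatten mulnDr leq_add //.
  exact: D_nest.
rewrite big_distrr leq_sum // => j _; rewrite big_distrr big_seq_cond [X in _ <= X]big_seq_cond.
apply: leq_sum => K /andP[K_in _].
exact: (nest_bounded_piece K_in xy).
Qed.

Lemma construction_nblock_ok : all (nblock_ok (3 * t + 1 + 3 * N)) L.
Proof.
rewrite all_cat; apply/andP; split.
  by apply/allP => p /(allP D_ok); apply: nblock_ok_widen; rewrite leq_addr.
apply/allP => p /flattenP[_ /mapP[j _ ->] /flattenP[_ /mapP[K K_in ->]]].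
exact: (allP (nblock_ok_piece K_in)).
Qed.

End Construction.

Lemma sum_pairs_in_block v (A : {set 'I_v}) (x : 'I_v) :
  \sum_(y | y != x) ((x \in A) && (y \in A)) = (x \in A) * #|A :\ x|.
Proof.
have [xA|xA] := boolP (x \in A); last by rewrite big1 // => y _; rewrite (negbTE xA).
rewrite mul1n -sum1_card [RHS]big_mkcond [LHS]big_mkcond; apply: eq_bigr => y _.
by rewrite !inE andbC; case: (y != x); case: (y \in A).
Qed.

Lemma BIBD_replication v k (B : seq {set 'I_v}) (x : 'I_v) :
  BIBD v k 1 B -> count (fun A : {set 'I_v} => x \in A) B * k.-1 = v.-1.
Proof.
case=> B_size B_pairs.
have <- : \sum_(y | y != x) count (fun A : {set 'I_v} => (x \in A) && (y \in A)) B = v.-1.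
  rewrite (eq_bigr (fun _ => 1)) => [|y yx]; last by apply: B_pairs; rewrite eq_sym.
  by rewrite sum1_card cardC1 card_ord.
under eq_bigr do rewrite count_sum.
rewrite exchange_big count_sum big_distrl /=; apply: eq_big_seq => A A_in.
rewrite sum_pairs_in_block; have [xA|//] := boolP (x \in A).
by have := cardsD1 x A; rewrite xA (B_size _ A_in) add1n => ->; rewrite mul1n.
Qed.

Lemma BIBD_perm v k l (B B' : seq {set 'I_v}) : perm_eq B B' -> BIBD v k l B -> BIBD v k l B'.
Proof.
move=> BB' [B_size B_pairs]; split=> [A|x y xy].
  by rewrite -(perm_mem BB'); apply: B_size.
by rewrite -(permP BB'); apply: B_pairs.
Qed.

Lemma resolution_size v k (P : seq (seq {set 'I_v})) :
  0 < v -> BIBD v k 1 (flatten P) -> (forall c, c \in P -> parallel_class v c) ->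
  size P * k.-1 = v.-1.
Proof.
move=> v_gt0 design parallel; rewrite -(BIBD_replication (Ordinal v_gt0) design).
rewrite count_flatten sumnE big_map (eq_big_seq (fun _ => 1)) ?sum1_size //.
by move=> c /parallel; apply.
Qed.

Definition derived_blocks v (B : seq {set 'I_v}) (p : 'I_v) : seq (seq nat) :=
  [seq nat_enum (A :\ p) | A : {set 'I_v} <- B & p \in A].

Section Derived.

Variables (v k : nat) (B : seq {set 'I_v}) (p : 'I_v).
Hypothesis design : BIBD v k 1 B.

Lemma size_derived_blocks : size (derived_blocks B p) * k.-1 = v.-1.
Proof. by rewrite size_map size_filter; apply: BIBD_replication. Qed.

Lemma derived_block_ok g :
  g \in derived_blocks B p -> [/\ size g = k.-1, uniq g & all (gtn v) g].
Proof.
case/mapP=> A; rewrite mem_filter => /andP[pA A_in] ->.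
rewrite nat_enum_uniq nat_enum_lt size_nat_enum; split=> //.
by have := cardsD1 p A; rewrite pA (design.1 _ A_in) add1n => ->.
Qed.

Lemma derived_blocks_partition x :
  x < v -> count (fun g => x \in g) (rcons (derived_blocks B p) [:: nat_of_ord p]) = 1.
Proof.
move=> x_lt; rewrite -cats1 count_cat /= inE addn0 count_map count_filter.
have [->|x_neq] := eqVneq x p.
  rewrite addn1; congr _.+1; apply/eqP; rewrite -leqn0 leqNgt -has_count.
  by apply/hasP => -[A _ /=]; rewrite mem_nat_enum setD11.
rewrite addn0.
have px : p != Ordinal x_lt by apply: contraNneq x_neq => ->.
rewrite -(design.2 _ _ px); apply: eq_count => A /=.
by rewrite -[x]/(nat_of_ord (Ordinal x_lt)) mem_nat_enum !inE eq_sym px andbC.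
Qed.

End Derived.

Definition nat_nblocks v (B : seq {set 'I_v}) (f : seq 'I_v) : seq (seq nat * nat) :=
  [seq (nat_enum p.1, nat_of_ord p.2) | p <- zip B f].

Section NatBlocks.

Variables (v : nat) (B : seq {set 'I_v}) (f : seq 'I_v).
Hypotheses (size_f : size f = size B) (design : BIBD v 4 1 B).
Hypothesis f_out : forall p, p \in zip B f -> p.2 \notin p.1.
Hypothesis nested : partial_BIBD v 5 2 [seq p.2 |: p.1 | p <- zip B f].

Lemma nat_nblocks_ok : all (nblock_ok v) (nat_nblocks B f).
Proof.
apply/allP => _ /mapP[[A a] Aa_in ->]; rewrite /nblock_ok /= nat_enum_lt ltn_ord.
rewrite nat_enum_uniq mem_nat_enum (f_out Aa_in) size_nat_enum design.1 //.
by move: Aa_in => /(map_f fst); rewrite -/(unzip1 _) unzip1_zip ?size_f.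
Qed.

Lemma nat_nblocks_once x y :
  x < v -> y < v -> x != y -> pair_count (base (nat_nblocks B f)) x y = 1.
Proof.
move=> x_lt y_lt xy.
rewrite -(design.2 (Ordinal x_lt) (Ordinal y_lt) xy) /base -map_comp /pair_count count_map.
rewrite -[in RHS](unzip1_zip (eq_leq (esym size_f))) count_map; apply: eq_count => p /=.
by rewrite -(mem_nat_enum p.1 (Ordinal x_lt)) -(mem_nat_enum p.1 (Ordinal y_lt)).
Qed.

Lemma nat_nblocks_nest_bounded : nest_bounded (nat_nblocks B f).
Proof.
move=> x y xy.
have [x_lt|x_ge] := ltnP x v; last by rewrite (pair_count_ge _ (augmented_lt nat_nblocks_ok)).
have [y_lt|y_ge] := ltnP y v; last first.
  by rewrite pair_countC (pair_count_ge _ (augmented_lt nat_nblocks_ok)).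
rewrite nat_nblocks_once // muln1; apply: leq_trans (nested.2 (Ordinal x_lt) (Ordinal y_lt) xy).
rewrite /augmented -map_comp /pair_count !count_map leq_eqVlt; apply/orP; left; apply/eqP.
apply: eq_count => p /=.
by rewrite !inE -(mem_nat_enum p.1 (Ordinal x_lt)) -(mem_nat_enum p.1 (Ordinal y_lt)).
Qed.

End NatBlocks.

Definition set_of_seq v (s : seq nat) : {set 'I_v} := [set x : 'I_v | nat_of_ord x \in s].

Lemma card_set_of_seq v (s : seq nat) : uniq s -> all (gtn v) s -> #|set_of_seq v s| = size s.
Proof.
move=> s_uniq /allP s_lt.
have enum_perm : perm_eq (nat_enum (set_of_seq v s)) s.
  apply: uniq_perm => //; first exact: nat_enum_uniq.
  move=> z; apply/mapP/idP => [[x]|z_in]; first by rewrite mem_enum inE => ? ->.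
  by exists (Ordinal (s_lt z z_in)); rewrite ?mem_enum ?inE.
by rewrite -size_nat_enum (perm_size enum_perm).
Qed.

Lemma nested_BIBD_of_nat v (L : seq (seq nat * nat)) :
  0 < v -> all (nblock_ok v) L ->
  (forall x y, x < v -> y < v -> x != y -> pair_count (base L) x y = 1) ->
  nest_bounded L -> exists B, nested_BIBD v B.
Proof.
move=> v_gt0 /allP L_ok L_once L_nest.
have block_lt p z : p \in L -> z \in p.2 :: p.1 -> z < v.
  by move=> /L_ok /and3P[_ _ /allP]; apply.
pose phi (p : seq nat * nat) : 'I_v := insubd (Ordinal v_gt0) p.2.
have phiE p : p \in L -> nat_of_ord (phi p) = p.2.
  by move=> p_in; rewrite val_insubd (block_lt p) ?mem_head.
have augmentedE p : p \in L -> phi p |: set_of_seq v p.1 = set_of_seq v (p.2 :: p.1).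
  by move=> p_in; apply/setP => z; rewrite !inE -(inj_eq val_inj) /= phiE.
have card_augmented p : p \in L -> #|set_of_seq v (p.2 :: p.1)| = 5.
  move=> p_in; have /and3P[p_uniq /eqP p_size p_lt] := L_ok p p_in.
  by rewrite card_set_of_seq //= p_size.
have pair_countE (h : seq nat * nat -> seq nat) (x y : 'I_v) :
    count (fun A : {set 'I_v} => (x \in A) && (y \in A)) [seq set_of_seq v (h p) | p <- L] =
    pair_count (map h L) x y.
  by rewrite count_map /pair_count count_map; apply: eq_count => p; rewrite /= !inE.
exists [seq set_of_seq v p.1 | p <- L]; split; first split.
- move=> _ /mapP[p p_in ->].
  have /and3P[/andP[_ p_uniq] /eqP p_size /andP[_ p_lt]] := L_ok p p_in.
  by rewrite card_set_of_seq.
- by move=> x y xy; rewrite (pair_countE fst) L_once.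
exists [seq phi p | p <- L]; rewrite zip_map !size_map -map_comp; split=> //; split.
  move=> _ /mapP[p p_in ->] /=; rewrite inE phiE //.
  by case/L_ok/and3P: p_in => /andP[].
rewrite (eq_in_map _ (fun p => set_of_seq v (p.2 :: p.1)) L).1; last exact: augmentedE.
split=> [_ /mapP[p p_in ->]|x y xy]; first exact: card_augmented.
rewrite (pair_countE (fun p => p.2 :: p.1)).
by have := L_nest _ _ xy; rewrite (L_once x y (ltn_ord x) (ltn_ord y) xy).
Qed.

Theorem mainTheorem12 (m t : nat) :
  (exists B : seq {set 'I_(56 * m + 8)}, resolvable_BIBD (56 * m + 8) 8 1 B) ->
  t <= 8 * m ->
  (exists B : seq {set 'I_(3 * t + 1)}, nested_BIBD (3 * t + 1) B) ->
  exists B : seq {set 'I_(168 * m + 3 * t + 25)}, nested_BIBD (168 * m + 3 * t + 25) B.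
Proof.
move=> [B [design [P [perm_P parallel]]]] t_le [BT [BT_design [fT [size_fT [fT_out BT_nested]]]]].
have P_design : BIBD (56 * m + 8) 8 1 (flatten P) by apply: BIBD_perm design; rewrite perm_sym.
have N_gt0 : 0 < 56 * m + 8 by lia.
have t_lt : t < size P by have := resolution_size N_gt0 P_design parallel; rewrite -!subn1; lia.
have p_lt : 0 < 3 * t + 1 by lia.
pose gs := derived_blocks BT (Ordinal p_lt).
have gs_size : size gs = t.
  by have := size_derived_blocks (Ordinal p_lt) BT_design; rewrite -/gs -!subn1; lia.
have gs_triples := derived_block_ok (p := Ordinal p_lt) BT_design.
have gs_partition := derived_blocks_partition (Ordinal p_lt) BT_design.
have D_ok := nat_nblocks_ok size_fT BT_design fT_out.
have D_once := nat_nblocks_once size_fT BT_design.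
have D_nest := nat_nblocks_nest_bounded size_fT BT_design fT_out BT_nested.
rewrite (_ : 168 * m + 3 * t + 25 = 3 * t + 1 + 3 * (56 * m + 8)); last by lia.
apply: (nested_BIBD_of_nat (L := construction t P (nat_nblocks BT fT) gs)).
- by lia.
- exact: construction_nblock_ok P_design D_ok gs_size gs_triples.
- exact: construction_once P_design parallel t_lt D_ok D_once gs_size gs_triples gs_partition.
- exact: construction_nest_bounded P_design D_nest gs_size gs_triples.
Qed.
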